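(* Let $\Omega\subset\mathbb{R}^2$ be open and bounded, and let $G\in C^\infty(\bar\Omega,\mathbb{R}^{2\times2})$ be symmetric positive definite with $A=\sqrt G$. Assume $\min\mathcal{E}=0$, i.e. there is a smooth $u:\Omega\to\mathbb{R}^2$ with $(\nabla u)^T\nabla u=G$ and $\det\nabla u>0$ in $\Omega$. Then for this $u$, $$\mathcal{F}_1(u):=\int_\Omega QW(\nabla u(x)\lambda(x))\,dx=0,\qquad \lambda(x)=\mathrm{diag}\{|A(x)e_1|^{-1},|A(x)e_2|^{-1}\}.$$
   Context: $\mathcal{E}(u)=\int_\Omega\overline W(\nabla u\,A^{-1})\,dx$, where $\overline W:\mathbb{R}^{2\times2}\to[0,\infty]$ satisfies $\overline W(RF)=\overline W(F)$, $\overline W(R)=0$ and $\overline W(F)\ge c\,\mathrm{dist}^2(F,SO(2))$ for all $F$, $R\in SO(2)$, some $c>0$; so $\mathcal{E}(u)=0$ iff $\nabla u\in SO(2)A$ a.e. $W(M)=\sum_{j=1}^2(|Me_j|-1)^2$ and $QW$ is its quasiconvex envelope. *)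

From HB Require Import structures.
From mathcomp Require Import all_boot all_order all_algebra.
From mathcomp Require Import all_classical all_reals all_analysis.
Set Implicit Arguments. Unset Strict Implicit. Unset Printing Implicit Defensive.
Import Order.TTheory GRing.Theory Num.Theory.
Import numFieldNormedType.Exports.
Local Open Scope classical_set_scope.
Local Open Scope ring_scope.

Section Defs.
Variable R : realType.

Definition coord2 (p : R * R) (i : 'I_2) : R := if val i == 0%N then p.1 else p.2.
Definition ebasis (j : 'I_2) : R * R := if val j == 0%N then (1, 0) else (0, 1).

(* Jacobian matrix: (grad u x) i j = d u_i / d x_j (x). *)
Definition grad (u : R * R -> R * R) (x : R * R) : 'M[R]_2 :=
  \matrix_(i < 2, j < 2) coord2 ('D_(ebasis j) u x) i.

Fixpoint Dseq (V : normedModType R) (f : R * R -> V) (vs : seq (R * R)) : R * R -> V :=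
  if vs is v :: vs' then fun x => 'D_v (Dseq f vs') x else f.

Definition smooth_on (V : normedModType R) (O : set (R * R)) (f : R * R -> V) : Prop :=
  forall vs : seq (R * R),
    (forall x v, O x -> derivable (Dseq f vs) x v) /\
    {in O, continuous (Dseq f vs)}.

Definition leb2 := ((@lebesgue_measure R) \x (@lebesgue_measure R))%E.

Definition unit_square : set (R * R) :=
  [set x | (0 < x.1 < 1) /\ (0 < x.2 < 1)].

Definition colnorm (M : 'M[R]_2) (j : 'I_2) : R :=
  Num.sqrt (M 0 j ^+ 2 + M 1 j ^+ 2).

Definition W (M : 'M[R]_2) : R := \sum_(j < 2) (colnorm M j - 1) ^+ 2.

Definition test_fun (phi : R * R -> R * R) : Prop :=
  smooth_on setT phi /\
  exists eps : R, 0 < eps /\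
    forall x, ~ ((eps <= x.1 <= 1 - eps) /\ (eps <= x.2 <= 1 - eps)) -> phi x = 0.

Definition quasiconvex (f : 'M[R]_2 -> R) : Prop :=
  continuous f /\
  forall (F : 'M[R]_2) (phi : R * R -> R * R), test_fun phi ->
    ((f F)%:E <= \int[leb2]_(x in unit_square) (f (F + grad phi x))%:E)%E.

Definition QW (M : 'M[R]_2) : R :=
  sup [set g M | g in [set g : 'M[R]_2 -> R | quasiconvex g /\ forall N, g N <= W N]].


Definition sym_pd (M : 'M[R]_2) : Prop :=
  M^T = M /\ forall v : 'cV[R]_2, v != 0 -> 0 < (v^T *m M *m v) 0 0.

(* uniform continuity on a set (for bounded O this is equivalent to
   continuous extendability to the closure of O) *)
Definition unif_cont_on (O : set (R * R)) (f : R * R -> R) : Prop :=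
  forall eps : R, 0 < eps -> exists2 delta : R, 0 < delta &
    (forall x y, O x -> O y -> `|x - y| < delta -> `|f x - f y| < eps).

Definition lambda (A : R * R -> 'M[R]_2) (x : R * R) : 'M[R]_2 :=
  diag_mx (\row_(j < 2) (colnorm (A x) j)^-1).

End Defs.

From HB Require Import structures.
From mathcomp Require Import all_boot all_order all_algebra.
From mathcomp Require Import all_classical all_reals all_analysis.
Import Order.TTheory GRing.Theory Num.Theory.
Import numFieldNormedType.Exports.
Local Open Scope classical_set_scope.
Local Open Scope ring_scope.

(* Since the Gram matrix of grad u is G = A^T A, the columns of grad u have the
   same lengths |A e_j| as those of A, so grad u lambda has unit columns and
   W vanishes on it pointwise.  The zero function is quasiconvex and below
   W >= 0, hence 0 <= QW <= W, and QW (grad u lambda) = 0 on Omega. *)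

Section QuasiconvexEnvelope.
Variable R : realType.

Lemma quasiconvex_cst0 : quasiconvex (fun _ : 'M[R]_2 => 0).
Proof. by split=> [|F phi _]; [exact: cst_continuous | rewrite integral0]. Qed.

Lemma W_ge0 (M : 'M[R]_2) : 0 <= W M.
Proof. by rewrite sumr_ge0 // => j _; exact: sqr_ge0. Qed.

Lemma QW_eq0 (M : 'M[R]_2) : W M = 0 -> QW M = 0.
Proof.
move=> WM0; rewrite /QW.
set S := [set g M | g in _].
have S0 : S 0 by exists (fun _ => 0) => //; split; [exact: quasiconvex_cst0 | exact: W_ge0].
have ubS : ubound S 0 by move=> _ [g [_ gW] <-]; rewrite -WM0.
apply/le_anti/andP; split; first by apply: ge_sup => //; exists 0.
by apply: sup_upper_bound => //; split; exists 0.
Qed.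

End QuasiconvexEnvelope.

Lemma gram_mx_diag (R : comPzRingType) (m n : nat) (M : 'M[R]_(m, n)) (j : 'I_n) :
  (M^T *m M) j j = \sum_i M i j ^+ 2.
Proof. by rewrite mxE; apply: eq_bigr => i _; rewrite mxE expr2. Qed.

Section ColumnNorms.
Variable R : realType.
Implicit Types (M N : 'M[R]_2) (d : 'rV[R]_2) (j : 'I_2).

Lemma colnormE M j : colnorm M j = Num.sqrt (\sum_i M i j ^+ 2).
Proof.
by rewrite /colnorm big_ord_recl big_ord1 (_ : lift ord0 ord0 = 1) //; apply: val_inj.
Qed.

Lemma colnorm_gram M N j : M^T *m M = N^T *m N -> colnorm M j = colnorm N j.
Proof. by move=> MN; rewrite !colnormE -!gram_mx_diag MN. Qed.

Lemma colnorm_mul_diag M d j : colnorm (M *m diag_mx d) j = `|d 0 j| * colnorm M j.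
Proof.
rewrite !colnormE mul_mx_diag.
under eq_bigr do rewrite mxE exprMn.
by rewrite -mulr_suml mulrC sqrtrM ?sqr_ge0 ?sqrtr_sqr.
Qed.

Lemma colnorm_gt0 M j : M j j != 0 -> 0 < colnorm M j.
Proof.
move=> Mjj; rewrite colnormE sqrtr_gt0 (bigD1 j) //=.
by rewrite ltr_wpDr ?exprn_even_gt0 ?Mjj ?orbT // sumr_ge0 // => i _; exact: sqr_ge0.
Qed.

Lemma W_normalize_cols M :
  (forall j, 0 < colnorm M j) -> W (M *m diag_mx (\row_j (colnorm M j)^-1)) = 0.
Proof.
move=> Mpos; rewrite /W big1 // => j _.
rewrite colnorm_mul_diag mxE ger0_norm ?invr_ge0 ?ltW // mulVf ?gt_eqF //.
by rewrite subrr expr0n.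
Qed.

End ColumnNorms.

Lemma sym_pd_diag_gt0 (R : realType) (M : 'M[R]_2) (j : 'I_2) : sym_pd M -> 0 < M j j.
Proof.
move=> [_ Mpd]; have ej_neq0 : (delta_mx j 0 : 'cV[R]_2) != 0.
  by apply/eqP => /matrixP/(_ j 0); rewrite !mxE !eqxx => /eqP; rewrite oner_eq0.
by have := Mpd _ ej_neq0; rewrite trmx_delta -rowE -colE !mxE.
Qed.

Theorem lemma6p1 (R : realType) (Omega : set (R * R))
    (G A : R * R -> 'M[R]_2) (u : R * R -> R * R) :
  (* Omega open and bounded *)
  open Omega ->
  (exists r : R, forall x, Omega x -> `|x| <= r) ->
  (* G in C^infty(closure Omega), symmetric positive definite *)
  (forall i j : 'I_2, smooth_on Omega (fun x => G x i j)) ->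
  (forall (i j : 'I_2) (vs : seq (R * R)),
      unif_cont_on Omega (Dseq (fun x => G x i j) vs)) ->
  {within closure Omega, continuous G} ->
  (forall x, closure Omega x -> sym_pd (G x)) ->
  (* A = sqrt G *)
  (forall x, closure Omega x -> sym_pd (A x) /\ A x *m A x = G x) ->
  (* u smooth with (grad u)^T grad u = G and det grad u > 0 in Omega *)
  smooth_on Omega u ->
  (forall x, Omega x -> (grad u x)^T *m grad u x = G x /\ 0 < \det (grad u x)) ->
  (\int[@leb2 R]_(x in Omega) (QW (grad u x *m lambda A x))%:E = 0)%E.
Proof.
move=> _ _ _ _ _ _ A_sqrtG _ u_isom.
rewrite (eq_integral (fun _ => 0%:E)) ?integral0 // => x; rewrite inE => Ox.
have [A_spd AAG] := A_sqrtG x (subset_closure Ox).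
have [gram_u _] := u_isom x Ox.
have colnA j : colnorm (A x) j = colnorm (grad u x) j.
  by apply: colnorm_gram; rewrite gram_u A_spd.1 AAG.
have -> : lambda A x = diag_mx (\row_j (colnorm (grad u x) j)^-1).
  by congr diag_mx; apply/rowP => j; rewrite !mxE colnA.
congr (_%:E); apply/QW_eq0/W_normalize_cols => j.
by rewrite -colnA colnorm_gt0 // gt_eqF // sym_pd_diag_gt0.
Qed.
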